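(* Let $r\in\mathbb{R}_+$. The map $(\mathbb{R}^2)^n\to\big[2^{\mathbb{R}^2}\big]^n$ given by $(p_1,\dots,p_n)\mapsto\big(\mathcal{N}_{\mathcal{G}_{\mathrm{LD}}(\{p_1,\dots,p_n\},r)}(p_1),\dots,\mathcal{N}_{\mathcal{G}_{\mathrm{LD}}(\{p_1,\dots,p_n\},r)}(p_n)\big)$ is spatially distributed over the $r$-disk graph $\mathcal{G}_{\mathrm{disk}}(\{p_1,\dots,p_n\},r)$.
   Context: For a tuple $(p_1,\dots,p_n)\in(\mathbb{R}^2)^n$ (possibly with repeated entries), $\mathcal{P}=\{p_1,\dots,p_n\}$ denotes the set of its distinct points. For such a point set, the Voronoi cell of $p_i$ is $V_i(\mathcal{P})=\{q\in\mathbb{R}^2:\|q-p_i\|\le\|q-p_j\|\ \forall p_j\in\mathcal{P}\}$; $B_\rho(p)$ is the closed Euclidean ball of radius $\rho$ about $p$. The $r$-disk graph $\mathcal{G}_{\mathrm{disk}}(\mathcal{P},r)$ has vertex set $\mathcal{P}$ and an edge between distinct $p_i,p_j$ iff $\|p_i-p_j\|\le r$. The $r$-limited Delaunay graph $\mathcal{G}_{\mathrm{LD}}(\mathcal{P},r)$ has vertex set $\mathcal{P}$ and an edge between distinct $p_i,p_j$ iff $\big(V_i(\mathcal{P})\cap B_{r/2}(p_i)\big)\cap\big(V_j(\mathcal{P})\cap B_{r/2}(p_j)\big)\neq\emptyset$. $\mathcal{N}_{\mathcal{G}}(p)$ denotes the set of neighbors of vertex $p$ in the graph $\mathcal{G}$.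 Given a proximity graph function $\mathcal{G}$ (assigning a graph with vertex set $\mathcal{P}$ to each point set $\mathcal{P}$) and a set $Y$, a map $f:(\mathbb{R}^2)^n\to Y^n$ is spatially distributed over $\mathcal{G}$ if there exist maps $\tilde f_i:\mathbb{R}^2\times 2^{\mathbb{R}^2}\to Y$, $i=1,\dots,n$, such that for all $(p_1,\dots,p_n)$, the $i$-th component satisfies $f_i(p_1,\dots,p_n)=\tilde f_i\big(p_i,\{p_j: p_j\in\mathcal{N}_{\mathcal{G}(\{p_1,\dots,p_n\})}(p_i)\}\big)$. *)

From Stdlib Require Import Reals.
From mathcomp Require Import ssreflect ssrbool fintype.
Open Scope R_scope.

Definition pt : Type := (R * R)%type.

Definition dist2 (p q : pt) : R :=
  sqrt ((fst p - fst q) ^ 2 + (snd p - snd q) ^ 2).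

Definition pset : Type := pt -> Prop.

Definition pts {n : nat} (p : 'I_n -> pt) : pset := fun q => exists i, p i = q.

Definition voronoi (P : pset) (c : pt) : pset :=
  fun q => forall pj, P pj -> dist2 q c <= dist2 q pj.

Definition ball2 (rho : R) (c : pt) : pset := fun q => dist2 q c <= rho.

Definition proxgraph : Type := pset -> pt -> pt -> Prop.

Definition G_disk (r : R) : proxgraph :=
  fun P a b => P a /\ P b /\ a <> b /\ dist2 a b <= r.

Definition G_LD (r : R) : proxgraph :=
  fun P a b => P a /\ P b /\ a <> b /\
    exists q, (voronoi P a q /\ ball2 (r / 2) a q) /\
              (voronoi P b q /\ ball2 (r / 2) b q).

Definition nbrs (G : proxgraph) (P : pset) (a : pt) : pset := fun b => G P a b.

Definition spatially_distributed {n : nat} {Y : Type}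
  (G : proxgraph) (f : ('I_n -> pt) -> ('I_n -> Y)) : Prop :=
  exists ft : 'I_n -> pt -> pset -> Y,
    forall (p : 'I_n -> pt) (i : 'I_n),
      f p i = ft i (p i) (fun q => (exists j, p j = q) /\ nbrs G (pts p) (p i) q).

(* An r-limited Delaunay neighbour b of c shares with c a point q at distance
   at most r/2 from both, so |c - b| <= r: b is a disk neighbour.  Conversely,
   near c (within r/2) the Voronoi cell of c is cut out by the disk
   neighbours of c alone, because any point farther than r from c is farther
   than r/2 from q.  Finally, given q in the cell of c, q lies in the cell of b
   exactly when q is equidistant from b and c.  Hence the Delaunay neighbours
   of c are computable from c and its disk neighbours. *)

From Stdlib Require Import Reals.
From mathcomp Require Import ssreflect ssrbool fintype.
From Stdlib Require Import Rgeom Lra Classical FunctionalExtensionality PropExtensionality.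
Open Scope R_scope.

Set Implicit Arguments.
Unset Strict Implicit.

Lemma dist2E (a b : pt) : dist2 a b = dist_euc (fst a) (snd a) (fst b) (snd b).
Proof. by rewrite /dist2 /dist_euc /Rsqr; f_equal; ring. Qed.

Lemma dist2C (a b : pt) : dist2 a b = dist2 b a.
Proof. by rewrite !dist2E; apply: distance_symm. Qed.

Lemma dist2_triangle (a b c : pt) : dist2 a c <= dist2 a b + dist2 b c.
Proof. by rewrite !dist2E; apply: triangle. Qed.

Lemma ball2_half_dist2_le (r : R) (a b q : pt) :
  ball2 (r / 2) a q -> ball2 (r / 2) b q -> dist2 a b <= r.
Proof.
rewrite /ball2 => qa qb.
by have := dist2_triangle a q b; rewrite (dist2C a q); lra.
Qed.

Lemma voronoi_eq_dist2 (P : pset) (a b q : pt) :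
  P a -> P b -> voronoi P a q -> voronoi P b q <-> dist2 q b = dist2 q a.
Proof.
move=> Pa Pb Va; split=> [Vb | eq_ba].
- by have := Va b Pb; have := Vb a Pa; lra.
- by move=> c Pc; rewrite eq_ba; apply: Va.
Qed.

Lemma voronoi_disk_nbrs (r : R) (P S : pset) (a q : pt) :
  P a -> (forall b, S b <-> G_disk r P a b) -> ball2 (r / 2) a q ->
  voronoi P a q <-> voronoi S a q.
Proof.
rewrite /ball2 => Pa defS qa; split=> Va b.
- by move=> /defS [_ [Pb _]]; apply: Va.
- move=> Pb; case: (classic (b = a)) => [-> | nba]; first lra.
  case: (Rle_or_lt (dist2 a b) r) => [ab_le | ab_gt].
  + by apply: Va; apply/defS; do 3!split=> //; exact: not_eq_sym.
  + by have := dist2_triangle a q b; rewrite (dist2C a q); lra.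
Qed.

Definition local_LD_nbrs (r : R) (a : pt) (S : pset) : pset :=
  fun b => S b /\
    exists q, voronoi S a q /\ ball2 (r / 2) a q /\ dist2 q b = dist2 q a.

Lemma G_LD_local (r : R) (P S : pset) (a b : pt) :
  P a -> (forall b, S b <-> G_disk r P a b) ->
  G_LD r P a b <-> local_LD_nbrs r a S b.
Proof.
move=> Pa defS; split.
- move=> [_ [Pb [nab [q [[Va qa] [Vb qb]]]]]].
  split; first by apply/defS; do 3!split=> //; exact: ball2_half_dist2_le qb.
  exists q; split; first exact/(voronoi_disk_nbrs Pa defS qa).
  by split=> //; apply/(voronoi_eq_dist2 Pa Pb Va).
- move=> [/defS [_ [Pb [nab _]]] [q [VSa [qa eq_ba]]]].
  have Va : voronoi P a q by apply/(voronoi_disk_nbrs Pa defS qa).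
  do 3!split=> //; exists q; split=> //; split.
  + exact/(voronoi_eq_dist2 Pa Pb Va).
  + by rewrite /ball2 eq_ba.
Qed.

(* The argument works for every r. *)
Theorem lemma1p5 (n : nat) (r : R) (hr : 0 < r) :
  spatially_distributed (Y := pset) (G_disk r)
    (fun (p : 'I_n -> pt) (i : 'I_n) => nbrs (G_LD r) (pts p) (p i)).
Proof.
exists (fun _ => local_LD_nbrs r) => p i.
apply: functional_extensionality => b; apply: propositional_extensionality.
apply: G_LD_local; first by exists i.
move=> c; split=> [[_ disk_ac] // | disk_ac].
by split=> //; case: disk_ac => _ [].
Qed.
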